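(* Let $\pi_0\in(0,1)$, $\sigma\in(0,0.25]$, $w>0$, and let $\psi(\pi)=w$ if $\pi\ge\pi_0$ and $\psi(\pi)=0$ otherwise. For $(p_0,p_1)\in[0,1]^2$ let $$\pi_S=\frac{(1-p_1)\pi_0}{(1-p_1)\pi_0+(1-p_0)(1-\pi_0)},\qquad \pi_C=\frac{p_1\pi_0}{p_1\pi_0+p_0(1-\pi_0)},$$ $$\Phi_\theta(C,\sigma,\pi_0,p_0,p_1)=0.5+2\sigma\theta+(0.5+2\sigma\theta)\psi\!\left(\tfrac{(1+4\sigma)\pi_C}{1+4\sigma\pi_C}\right)+(0.5-2\sigma\theta)\psi\!\left(\tfrac{(1-4\sigma)\pi_C}{1-4\sigma\pi_C}\right)$$ and $\Phi_\theta(S,\sigma,\pi_0,p_0,p_1)=0.5+\psi(\pi_S)$, for $\theta\in\{0,1\}$. Then $$\Phi_\theta(C,\sigma,\pi_0,p_0,p_1)=\begin{cases}0.5+2\sigma\theta & \text{if } p_1(1+4\sigma)<p_0,\\ 0.5+2\sigma\theta+(0.5+2\sigma\theta)w & \text{if } p_1(1-4\sigma)<p_0\le p_1(1+4\sigma),\\ 0.5+2\sigma\theta+w & \text{if } p_0\le p_1(1-4\sigma),\end{cases}$$ and $\Phi_\theta(S,\sigma,\pi_0,p_0,p_1)=0.5+w$ if $p_0\ge p_1$ and $0.5$ otherwise.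
   Context: Interpretation: an expert of known type $\theta$ (competent iff $\theta=1$, prior $\pi_0$) chooses the complex rule with probability $p_\theta$; $\pi_C,\pi_S$ are the advisee's beliefs after observing the complex or simple rule; the expert earns wage $w$ iff the advisee's posterior that he is competent is at least $\pi_0$; $\Phi_\theta(r,\cdot)$ is the type-$\theta$ expert's expected payoff from choosing rule $r$ with certainty. *)

From mathcomp Require Import all_boot all_order all_algebra.
Set Implicit Arguments. Unset Strict Implicit. Unset Printing Implicit Defensive.
Import Order.TTheory GRing.Theory Num.Theory.
Local Open Scope ring_scope.

Definition psi {R : realFieldType} (pi0 w pi : R) : R :=
  if pi0 <= pi then w else 0.

Definition piS {R : realFieldType} (pi0 p0 p1 : R) : R :=
  (1 - p1) * pi0 / ((1 - p1) * pi0 + (1 - p0) * (1 - pi0)).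

Definition piC {R : realFieldType} (pi0 p0 p1 : R) : R :=
  p1 * pi0 / (p1 * pi0 + p0 * (1 - pi0)).

Definition PhiC {R : realFieldType} (th sigma pi0 w p0 p1 : R) : R :=
  let pc := piC pi0 p0 p1 in
  (1/2 + 2 * sigma * th)
  + (1/2 + 2 * sigma * th) * psi pi0 w ((1 + 4 * sigma) * pc / (1 + 4 * sigma * pc))
  + (1/2 - 2 * sigma * th) * psi pi0 w ((1 - 4 * sigma) * pc / (1 - 4 * sigma * pc)).

Definition PhiS {R : realFieldType} (pi0 w p0 p1 : R) : R :=
  1/2 + psi pi0 w (piS pi0 p0 p1).

(* Every belief in the statement is a Bayesian posterior: pi_S and pi_C
   update the prior pi0 with likelihoods (1 - p1, 1 - p0) and (p1, p0), and
   the updated beliefs (1 +- 4 sigma) pi_C / (1 +- 4 sigma pi_C) update pi_C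
   once more with likelihood ratio (1 +- 4 sigma) : 1, i.e. they are the
   posteriors of pi0 for the likelihoods ((1 +- 4 sigma) p1, p0).  A posterior
   is at least the prior exactly when the likelihood of the competent type is
   at least that of the incompetent one, which turns each wage psi into the
   indicator of a linear inequality in p0 and p1. *)

From mathcomp Require Import all_boot all_order all_algebra.
From mathcomp Require Import ring lra.
Import Order.TTheory GRing.Theory Num.Theory.
Local Open Scope ring_scope.

Section Bayes.

Context {R : realFieldType}.

Definition evidence (pi0 l1 l0 : R) : R := l1 * pi0 + l0 * (1 - pi0).

(* [piC pi0 p0 p1] and [piS pi0 p0 p1] are convertible to [posterior pi0 p1 p0]
   and [posterior pi0 (1 - p1) (1 - p0)]. *)
Definition posterior (pi0 l1 l0 : R) : R := l1 * pi0 / evidence pi0 l1 l0.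

Lemma evidence_ge0 (pi0 l1 l0 : R) :
  0 <= pi0 <= 1 -> 0 <= l1 -> 0 <= l0 -> 0 <= evidence pi0 l1 l0.
Proof.
move=> /andP[pi0_ge0 pi0_le1] l1_ge0 l0_ge0.
by rewrite addr_ge0 ?mulr_ge0 ?subr_ge0.
Qed.

Lemma posterior_ge0 (pi0 l1 l0 : R) :
  0 <= pi0 <= 1 -> 0 <= l1 -> 0 <= l0 -> 0 <= posterior pi0 l1 l0.
Proof.
move=> pi0_01 l1_ge0 l0_ge0; rewrite divr_ge0 ?evidence_ge0 ?mulr_ge0 //.
by case/andP: pi0_01.
Qed.

Lemma evidence_posterior (pi0 l1 l0 k1 k0 : R) : evidence pi0 l1 l0 != 0 ->
  evidence (posterior pi0 l1 l0) k1 k0 * evidence pi0 l1 l0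
  = evidence pi0 (k1 * l1) (k0 * l0).
Proof. by rewrite /posterior /evidence => ev_neq0; field. Qed.

Lemma posteriorA (pi0 l1 l0 k1 k0 : R) : evidence pi0 l1 l0 != 0 ->
  posterior (posterior pi0 l1 l0) k1 k0 = posterior pi0 (k1 * l1) (k0 * l0).
Proof.
move=> ev_neq0.
rewrite [RHS]/posterior -(evidence_posterior _ _ _ k1 k0 ev_neq0).
by rewrite [in LHS]/posterior invfM; ring.
Qed.

Lemma prior_le_posterior (pi0 l1 l0 : R) :
  0 < pi0 < 1 -> 0 < evidence pi0 l1 l0 ->
  (pi0 <= posterior pi0 l1 l0) = (l0 <= l1).
Proof.
move=> /andP[pi0_gt0 pi0_lt1] ev_gt0.
have gain : l1 * pi0 - pi0 * evidence pi0 l1 l0 = pi0 * (1 - pi0) * (l1 - l0).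
  by rewrite /evidence; ring.
rewrite ler_pdivlMr // -subr_ge0 gain pmulr_rge0 ?subr_ge0 //.
by rewrite mulr_gt0 ?subr_gt0.
Qed.

Lemma prior_le_reposterior (pi0 l1 l0 k : R) : 0 < pi0 < 1 ->
  0 <= l1 -> 0 <= l0 -> 0 <= k ->
  evidence pi0 l1 l0 != 0 -> evidence (posterior pi0 l1 l0) k 1 != 0 ->
  (pi0 <= posterior (posterior pi0 l1 l0) k 1) = (l0 <= l1 * k).
Proof.
move=> pi0_01 l1_ge0 l0_ge0 k_ge0 ev_neq0 evk_neq0.
have pi0_01w : 0 <= pi0 <= 1 by case/andP: pi0_01 => *; rewrite !ltW.
have ev_gt0 : 0 < evidence pi0 (k * l1) (1 * l0).
  rewrite lt0r evidence_ge0 ?mulr_ge0 // andbT.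
  by rewrite -(evidence_posterior _ _ _ k 1 ev_neq0) mulf_neq0.
by rewrite posteriorA // prior_le_posterior // mul1r mulrC.
Qed.

End Bayes.

Lemma PhiS_threshold (R : realFieldType) (pi0 w p0 p1 : R) :
  0 < pi0 < 1 -> 0 <= p0 <= 1 -> 0 <= p1 <= 1 ->
  evidence pi0 (1 - p1) (1 - p0) != 0 ->
  PhiS pi0 w p0 p1 = 1/2 + (if p1 <= p0 then w else 0).
Proof.
move=> pi0_01 /andP[p0_ge0 p0_le1] /andP[p1_ge0 p1_le1] evS_neq0.
have pi0_01w : 0 <= pi0 <= 1 by case/andP: pi0_01 => *; rewrite !ltW.
have evS_gt0 : 0 < evidence pi0 (1 - p1) (1 - p0).
  by rewrite lt0r evS_neq0 evidence_ge0 ?subr_ge0.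
by rewrite /PhiS /psi prior_le_posterior // lerD2l lerN2.
Qed.

Lemma PhiC_threshold (R : realFieldType) (th sigma pi0 w p0 p1 : R) :
  0 < pi0 < 1 -> 0 < sigma <= 1/4 -> 0 <= p0 -> 0 <= p1 ->
  evidence pi0 p1 p0 != 0 -> 1 - 4 * sigma * piC pi0 p0 p1 != 0 ->
  PhiC th sigma pi0 w p0 p1 =
    1/2 + 2 * sigma * th
    + (1/2 + 2 * sigma * th) * (if p0 <= p1 * (1 + 4 * sigma) then w else 0)
    + (1/2 - 2 * sigma * th) * (if p0 <= p1 * (1 - 4 * sigma) then w else 0).
Proof.
move=> pi0_01 /andP[sigma_gt0 sigma_le] p0_ge0 p1_ge0 evC_neq0 low_neq0.
have pi0_01w : 0 <= pi0 <= 1 by case/andP: pi0_01 => *; rewrite !ltW.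
set pC := posterior pi0 p1 p0.
have signal s : evidence pC (1 + s) 1 = 1 + s * pC by rewrite /evidence; ring.
have pC_ge0 : 0 <= pC by rewrite posterior_ge0.
have ev_up_neq0 : evidence pC (1 + 4 * sigma) 1 != 0.
  by rewrite signal; apply: lt0r_neq0; nra.
have ev_down_neq0 : evidence pC (1 - 4 * sigma) 1 != 0 by rewrite signal mulNr.
rewrite /PhiC /psi.
have -> : (1 + 4 * sigma) * pC / (1 + 4 * sigma * pC)
          = posterior pC (1 + 4 * sigma) 1 by rewrite /posterior signal.
have -> : (1 - 4 * sigma) * pC / (1 - 4 * sigma * pC)
          = posterior pC (1 - 4 * sigma) 1 by rewrite /posterior signal mulNr.
by rewrite !prior_le_reposterior //; lra.
Qed.

Theorem lemma5 (R : realFieldType) (pi0 sigma w th p0 p1 : R) :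
  0 < pi0 < 1 -> 0 < sigma <= 1/4 -> 0 < w ->
  (th = 0 \/ th = 1) ->
  0 <= p0 <= 1 -> 0 <= p1 <= 1 ->
  ((* the belief pi_C and the updated beliefs below are well defined *)
   p1 * pi0 + p0 * (1 - pi0) != 0 ->
   1 - 4 * sigma * piC pi0 p0 p1 != 0 ->
     (p1 * (1 + 4 * sigma) < p0 ->
        PhiC th sigma pi0 w p0 p1 = 1/2 + 2 * sigma * th)
  /\ (p1 * (1 - 4 * sigma) < p0 <= p1 * (1 + 4 * sigma) ->
        PhiC th sigma pi0 w p0 p1
          = 1/2 + 2 * sigma * th + (1/2 + 2 * sigma * th) * w)
  /\ (p0 <= p1 * (1 - 4 * sigma) ->
        PhiC th sigma pi0 w p0 p1 = 1/2 + 2 * sigma * th + w))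
  /\
  ((* the belief pi_S is well defined *)
   (1 - p1) * pi0 + (1 - p0) * (1 - pi0) != 0 ->
     PhiS pi0 w p0 p1 = if p1 <= p0 then 1/2 + w else 1/2).
Proof.
move=> pi0_01 sigma_bounds _ _ p0_01 p1_01.
split=> [evC_neq0 low_neq0|evS_neq0]; last first.
  by rewrite PhiS_threshold //; case: ifP; rewrite ?addr0.
have /andP[p0_ge0 _] := p0_01; have /andP[p1_ge0 _] := p1_01.
rewrite PhiC_threshold //.
have spread : p1 * (1 - 4 * sigma) <= p1 * (1 + 4 * sigma) by nra.
split; [|split] => [up_lt | /andP[down_lt up_le] | down_le].
- by rewrite (lt_geF up_lt) (lt_geF (le_lt_trans spread up_lt)) !mulr0 !addr0.
- by rewrite up_le (lt_geF down_lt) mulr0 addr0.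
- by rewrite down_le (le_trans down_le spread); field.
Qed.
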